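(* Suppose we have $2$ agents with additive, identical, normalized valuations, provided with a $2$-value prediction of accuracy $\eta<1-\frac{1-a}{2}$ for some given $a\in(\sqrt3-1,1]$; that is, the allowed error between the prediction and the true valuation is $1-\eta>\frac{1-a}{2}$. Then there is no online algorithm that guarantees an $a$-EFX allocation for all instances with error at most $1-\eta$, even when $T'=T=4$.
   Context: Online fair division with predictions and identical valuations: goods $g_1,\dots,g_T$ arrive one per time step; both agents share a true additive normalized valuation $v$ ($v(g_t)\ge0$, $\sum_{t\in[T]}v(g_t)=1$, $v(S)=\sum_{g\in S}v(g)$), and before any arrival the algorithm receives a prediction $p=(p(g_1),\dots,p(g_{T'}))$ (an additive normalized valuation over $T'$ predicted goods) and the accuracy level. A $2$-value prediction takes at most $2$ distinct values. Error $\frac12\sum_{t=1}^{\max\{T,T'\}}|p(g_t)-v(g_t)|$ (missing entries set to $0$); accuracy $\eta$ means the error is at most $1-\eta$. At time $t$, $v(g_t)$ is revealed and $g_t$ must be irrevocably allocated. For $S\ne\emptyset$, $\bar S=S\setminus\{g\}$ with $g\in\arg\max_{g'\in S}v(S\setminus\{g'\})$, $\bar\emptyset=\emptyset$. An allocation is $a$-EFX if $v(A_i)\ge a\cdot v(\bar A_j)$ for all $i,j$. *)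

From HB Require Import structures.
From mathcomp Require Import all_boot all_order all_algebra.
From mathcomp Require Import reals.
Set Implicit Arguments. Unset Strict Implicit. Unset Printing Implicit Defensive.
Import Order.TTheory GRing.Theory Num.Theory.
Local Open Scope ring_scope.

Section FairDiv.
Variable R : realType.
Variable n : nat.

Definition setval (v : 'I_n -> R) (S : {set 'I_n}) : R := \sum_(g in S) v g.

Definition normalized (v : 'I_n -> R) : Prop :=
  (forall t, 0 <= v t) /\ \sum_(t < n) v t = 1.

Definition two_valued (p : 'I_n -> R) : Prop :=
  exists x y : R, forall t, p t = x \/ p t = y.

(* error (1/2) sum_t |p(g_t) - v(g_t)|  (here T = T' = n) *)
Definition pred_error (p v : 'I_n -> R) : R :=
  2^-1 * \sum_(t < n) `|p t - v t|.

(* v(bar S) = max_{g in S} v(S \ {g}), and v(bar emptyset) = 0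
   (values are nonnegative, so the default 0 does not affect the max
   when S is nonempty) *)
Definition vbar (v : 'I_n -> R) (S : {set 'I_n}) : R :=
  \big[Num.max/0]_(g in S) setval v (S :\ g).

Definition bundle (alloc : 'I_n -> bool) (i : bool) : {set 'I_n} :=
  [set t | alloc t == i].

Definition aEFX (a : R) (v : 'I_n -> R) (alloc : 'I_n -> bool) : Prop :=
  forall i j : bool, setval v (bundle alloc i) >= a * vbar v (bundle alloc j).

(* Online run of a deterministic online rule: good t is irrevocably
   allocated based only on the values v(g_0), ..., v(g_t) revealed so far
   (past decisions are determined by the earlier prefixes). *)
Definition online_alloc (rule : seq R -> bool) (v : 'I_n -> R) : 'I_n -> bool :=
  fun t => rule (take t.+1 [seq v i | i <- enum 'I_n]).

End FairDiv.

From HB Require Import structures.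
From mathcomp Require Import all_boot all_order all_algebra.
From mathcomp Require Import reals.
From mathcomp Require Import lra.
Set Implicit Arguments. Unset Strict Implicit. Unset Printing Implicit Defensive.
Import Order.TTheory GRing.Theory Num.Theory.
Local Open Scope ring_scope.

(* The prediction is (x, x, y, y) with x = (1 - a)/2 + eps and y = a/2 - eps.
   The algorithm must place the first two goods, both of value x, before it
   learns anything else.  If it gives them to the same agent, the adversary
   keeps the valuation equal to the prediction, and then every way of
   placing the two goods of value y leaves an agent envying the other by
   more than a factor a, up to one good; this needs 2x < a y, i.e.
   a^2 + 2a - 2 > 0 for small eps, i.e. a > sqrt 3 - 1.  If it separates
   them, the adversary moves value from the third to the fourth good,
   revealing (x, x, a - 1/2 - 2 eps, 1/2); this is at error (1 - a)/2 + eps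
   from the prediction, within the budget 1 - eta for small eps, and now
   whoever does not receive the good of value 1/2 envies the other too
   much. *)

Section Allocations.
Variables (R : realType) (n : nat).
Implicit Types (v : 'I_n -> R) (al : 'I_n -> bool).

Lemma setvalE v (S : {set 'I_n}) :
  setval v S = \sum_(t < n) if t \in S then v t else 0.
Proof. by rewrite /setval big_mkcond. Qed.

Lemma eq_aEFX a v al al' : al =1 al' -> aEFX a v al -> aEFX a v al'.
Proof.
move=> eq_al efx i j.
have eq_bundle k : bundle al k = bundle al' k by apply/setP => t; rewrite !inE eq_al.
by rewrite -!eq_bundle.
Qed.

Lemma aEFX_negb a v al : aEFX a v al -> aEFX a v (fun t => ~~ al t).
Proof.
move=> efx i j.
have bundle_negb k : bundle (fun t => ~~ al t) k = bundle al (~~ k).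
  by apply/setP => t; rewrite !inE; case: (al t); case: k.
by rewrite !bundle_negb.
Qed.

Lemma pred_errorxx (p : 'I_n -> R) : pred_error p p = 0.
Proof. by rewrite /pred_error big1 ?mulr0 // => t _; rewrite subrr normr0. Qed.

Lemma envy_not_aEFX a v al i g : 0 <= a ->
  setval v (bundle al i) < a * setval v (bundle al (al g) :\ g) ->
  ~ aEFX a v al.
Proof.
move=> a_ge0 envy efx; move: (efx i (al g)); apply/negP; rewrite -ltNge.
apply: (lt_le_trans envy); apply: ler_wpM2l => //.
by rewrite /vbar (bigD1 g) ?inE //= le_max lexx.
Qed.

End Allocations.

Section FourGoods.
Variable R : realType.

Definition vals4 (v0 v1 v2 v3 : R) : 'I_4 -> R :=
  fun t => nth 0 [:: v0; v1; v2; v3] t.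

Definition alloc4 (b0 b1 b2 b3 : bool) : 'I_4 -> bool :=
  fun t => nth false [:: b0; b1; b2; b3] t.

Lemma online_alloc_vals4 (rule : seq R -> bool) v0 v1 v2 v3 :
  online_alloc rule (vals4 v0 v1 v2 v3) =1
  alloc4 (rule [:: v0]) (rule [:: v0; v1]) (rule [:: v0; v1; v2])
         (rule [:: v0; v1; v2; v3]).
Proof.
have vals : [seq vals4 v0 v1 v2 v3 t | t <- enum 'I_4] = [:: v0; v1; v2; v3].
  by rewrite (map_comp (nth 0 [:: v0; v1; v2; v3]) val) val_enum_ord.
by move=> [[|[|[|[|k]]]] lt_k4] //; rewrite /online_alloc vals.
Qed.

Lemma alloc4_negb b0 b1 b2 b3 :
  (fun t => ~~ alloc4 b0 b1 b2 b3 t) =1 alloc4 (~~ b0) (~~ b1) (~~ b2) (~~ b3).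
Proof. by move=> [[|[|[|[|k]]]] lt_k4]. Qed.

Lemma normalized_vals4 v0 v1 v2 v3 :
  0 <= v0 -> 0 <= v1 -> 0 <= v2 -> 0 <= v3 -> v0 + v1 + v2 + v3 = 1 ->
  normalized (vals4 v0 v1 v2 v3).
Proof.
move=> ? ? ? ? sum1; split; first by move=> [[|[|[|[|k]]]] lt_k4].
by rewrite !big_ord_recl big_ord0 /vals4 /= addr0 !addrA.
Qed.

Lemma pred_error_vals4 p0 p1 p2 p3 v0 v1 v2 v3 :
  pred_error (vals4 p0 p1 p2 p3) (vals4 v0 v1 v2 v3) =
  2^-1 * (`|p0 - v0| + `|p1 - v1| + `|p2 - v2| + `|p3 - v3|).
Proof. by rewrite /pred_error !big_ord_recl big_ord0 /vals4 /= addr0 !addrA. Qed.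

Local Notation good k := (@Ordinal 4 k isT).

Ltac eval_bundles :=
  rewrite !setvalE !big_ord_recl !big_ord0 /vals4 /alloc4 /= !inE /=.

Lemma not_aEFX_paired a x y b b2 b3 : 0 <= a ->
  0 < a * (x + y + y) -> y < a * (x + y) -> x + x < a * y ->
  ~ aEFX a (vals4 x x y y) (alloc4 b b b2 b3).
Proof.
move=> a_ge0 envy_all envy_one envy_none.
wlog -> : b b2 b3 / b = true => [sym|].
  case: b; first exact: sym.
  by move/aEFX_negb/(eq_aEFX (alloc4_negb _ _ _ _)); apply: sym.
case: b2 b3 => [] [].
- by apply: (envy_not_aEFX (i := false) (g := good 0)) => //; eval_bundles; lra.
- by apply: (envy_not_aEFX (i := false) (g := good 0)) => //; eval_bundles; lra.
- by apply: (envy_not_aEFX (i := false) (g := good 0)) => //; eval_bundles; lra.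
- by apply: (envy_not_aEFX (i := true) (g := good 2)) => //; eval_bundles; lra.
Qed.

Lemma not_aEFX_split a x z w b b2 b3 : 0 <= a ->
  x < a * (z + w) -> x + z < a * w ->
  ~ aEFX a (vals4 x x z w) (alloc4 b (~~ b) b2 b3).
Proof.
move=> a_ge0 envy_single envy_pair.
wlog -> : b b2 b3 / b = true => [sym|].
  case: b; first exact: sym.
  by move/aEFX_negb/(eq_aEFX (alloc4_negb _ _ _ _)); apply: sym.
case: b2 b3 => [] [].
- by apply: (envy_not_aEFX (i := false) (g := good 0)) => //; eval_bundles; lra.
- by apply: (envy_not_aEFX (i := true) (g := good 1)) => //; eval_bundles; lra.
- by apply: (envy_not_aEFX (i := false) (g := good 0)) => //; eval_bundles; lra.
- by apply: (envy_not_aEFX (i := true) (g := good 1)) => //; eval_bundles; lra.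
Qed.

End FourGoods.

Lemma sqrt3_sub1_lt (R : realType) (a : R) :
  Num.sqrt 3 - 1 < a -> 7 / 10 < a /\ 0 < a ^+ 2 + 2 * a - 2.
Proof.
have sqrt3_ge0 : 0 <= Num.sqrt (3 : R) := sqrtr_ge0 _.
have sqrt3_sq : Num.sqrt (3 : R) ^+ 2 = 3 by rewrite sqr_sqrtr.
by move=> a_gt; split; nra.
Qed.

Section Adversary.
Variables (R : realType) (a eps : R).
Hypotheses (a_gt7 : 7 / 10 < a) (a_le1 : a <= 1).
Hypotheses (eps_gt0 : 0 < eps) (eps_small : eps <= (a ^+ 2 + 2 * a - 2) / 10).

Definition small_value := (1 - a) / 2 + eps.
Definition large_value := a / 2 - eps.
Definition shrunk_value := a - 1 / 2 - 2 * eps.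

Definition prediction := vals4 small_value small_value large_value large_value.
Definition deviation := vals4 small_value small_value shrunk_value (1 / 2).

Let slack : 0 <= ((a ^+ 2 + 2 * a - 2) / 10 - eps) * a.
Proof. by move: (a_gt7) (eps_small) => *; apply: mulr_ge0; lra. Qed.

(* [lra] and [nra] ignore section hypotheses, hence this copy into the context. *)
Ltac intro_params := move: (a_gt7) (a_le1) (eps_gt0) (eps_small) (slack) => *.

Lemma normalized_prediction : normalized prediction.
Proof.
by apply: normalized_vals4; rewrite /small_value /large_value; intro_params; nra.
Qed.

Lemma two_valued_prediction : two_valued prediction.
Proof. by exists small_value, large_value => [[[|[|[|[|k]]]] lt_k4]]; auto. Qed.

Lemma normalized_deviation : normalized deviation.
Proof.
by apply: normalized_vals4; rewrite /small_value /shrunk_value; intro_params; nra.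
Qed.

Lemma pred_error_deviation : pred_error prediction deviation = (1 - a) / 2 + eps.
Proof.
rewrite pred_error_vals4 !subrr normr0.
rewrite ger0_norm /large_value /shrunk_value; last by intro_params; nra.
by rewrite ler0_norm; intro_params; nra.
Qed.

Lemma not_aEFX_prediction b b2 b3 : ~ aEFX a prediction (alloc4 b b b2 b3).
Proof.
by apply: not_aEFX_paired; rewrite /small_value /large_value; intro_params; nra.
Qed.

Lemma not_aEFX_deviation b b2 b3 : ~ aEFX a deviation (alloc4 b (~~ b) b2 b3).
Proof.
by apply: not_aEFX_split; rewrite /small_value /shrunk_value; intro_params; nra.
Qed.

End Adversary.

Theorem theorem4p16 (R : realType) (a eta : R) :
  Num.sqrt 3 - 1 < a -> a <= 1 -> eta < 1 - (1 - a) / 2 ->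
  forall alg : ('I_4 -> R) -> R -> seq R -> bool,
  exists p : 'I_4 -> R,
    normalized p /\ two_valued p /\
    exists v : 'I_4 -> R,
      normalized v /\ pred_error p v <= 1 - eta /\
      ~ aEFX a v (online_alloc (alg p eta) v).
Proof.
move=> a_gt a_le1 eta_lt alg.
have [a_gt7 quad_gt0] := sqrt3_sub1_lt a_gt.
pose eps := Num.min (1 - eta - (1 - a) / 2) ((a ^+ 2 + 2 * a - 2) / 10).
have eps_gt0 : 0 < eps by rewrite lt_min; apply/andP; split; lra.
have eps_err : eps <= 1 - eta - (1 - a) / 2 by rewrite ge_min lexx.
have eps_small : eps <= (a ^+ 2 + 2 * a - 2) / 10 by rewrite ge_min lexx orbT.
exists (prediction a eps); split; first exact: normalized_prediction.
split; first exact: two_valued_prediction.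
set rule := alg _ eta; set x := small_value a eps.
have [same | differ] := eqVneq (rule [:: x]) (rule [:: x; x]).
- exists (prediction a eps); split; first exact: normalized_prediction.
  split; first by rewrite pred_errorxx; lra.
  move/(eq_aEFX (online_alloc_vals4 rule _ _ _ _)); rewrite -same.
  exact: not_aEFX_prediction.
- exists (deviation a eps); split; first exact: normalized_deviation.
  split; first by rewrite pred_error_deviation; lra.
  move/(eq_aEFX (online_alloc_vals4 rule _ _ _ _)).
  have -> : rule [:: x; x] = ~~ rule [:: x].
    by move: differ; case: (rule _); case: (rule _).
  exact: not_aEFX_deviation.
Qed.
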